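(* Consider the Histogram Partitioning algorithm (described in the context) on $N$ distinct keys over $p$ processors, where in round $j$ each key of $\gamma_j$ is sampled independently with probability $\frac{cp}{|\gamma_j|\log^* p}$ with $c=3\ln 2.5$. Let $t\ge 1$. If the number $k$ of unachieved splitters at the start of round $j$ satisfies $k\le\frac{p}{t\log^* p}$, then with high probability the number of unachieved splitters after round $j$ is at most $\max\left(\frac{p}{\log p\,\log^* p},\ \frac{p}{t\,2^t\log^* p}\right)$.
   Context: Setting: $N$ distinct keys from a totally ordered set are distributed across $p$ processors, $N/p$ keys per processor. For $\ell\in\{1,\dots,p-1\}$, the target range of splitter $\ell$ is the rank range $[\frac{N\ell}{p},\frac{N\ell}{p}+\frac{N}{p}]$; splitter $\ell$ is achieved in a round if some key with rank in this range is sampled in that round (and stays achieved afterwards). Histogram Partitioning proceeds in rounds; in round $j$, keys are sampled independently from a set $\gamma_j$ ($\gamma_1$ = all keys), and the global ranks of the samples are computed and made known to all processors. For each unachieved splitter $\ell$, $L_j(\ell)$ is the largest key sampled before round $j$ with rank below $\frac{N\ell}{p}$ (or the smallest key) and $U_j(\ell)$ the smallest key sampled before round $j$ with rank above $\frac{N\ell}{p}+\frac{N}{p}$ (or the largest key); $\gamma_j$ is the union over splitters $\ell$ unachieved before round $j$ of the keys between $L_j(\ell)$ and $U_j(\ell)$. $\log^* x=0$ for $x\le1$ and $\log^* x=1+\log^*(\log x)$ for $x>1$. ''With high probability'' means with probability tending to $1$ as $p\to\infty$ (the paper's bound is $1-e^{-p/(40\log p\log^* p)}$). *)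

From HB Require Import structures.
From mathcomp Require Import all_boot all_order all_algebra.
From mathcomp Require Import reals exp.
Set Implicit Arguments. Unset Strict Implicit. Unset Printing Implicit Defensive.
Import Order.TTheory GRing.Theory Num.Theory.
Local Open Scope ring_scope.

Section HP.
Variable R : realType.

Definition log2 (x : R) : R := ln x / ln 2.

Fixpoint logstar_iter (n : nat) (x : R) : nat :=
  if n is n'.+1 then (if x <= 1 then 0%N else (logstar_iter n' (log2 x)).+1)
  else 0%N.
(* fuel p.+1 is always sufficient for x = p (log* p <= p) *)
Definition logstar (p : nat) : nat := logstar_iter p.+1 p%:R.

Definition cHP : R := 3 * ln (5 / 2).
End HP.

(* Keys are identified with their ranks 0..N-1, N = p*m (m = N/p keys per
   processor).  Splitters are l in 'I_p with 0 < l. *)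
Section Algo.
Variables p m : nat.
Notation N := (p * m)%N.

(* key of rank i lies in the target range [N l/p, N l/p + N/p] of splitter l *)
Definition in_target (l : 'I_p) (i : 'I_N) : bool :=
  (l * m <= i <= l * m + m)%N.

(* S = set of all keys sampled before the round *)
Definition unachieved (S : {set 'I_N}) : {set 'I_p} :=
  [set l : 'I_p | (0 < l)%N & [forall i in S, ~~ in_target l i]].

(* L(l): largest sampled key of rank below N l/p, or the smallest key (rank 0) *)
Definition Lkey (S : {set 'I_N}) (l : 'I_p) : nat :=
  \max_(s in S | (s < l * m)%N) (s : nat).

(* U(l): smallest sampled key of rank above N l/p + N/p, or the largest key *)
Definition Ukey (S : {set 'I_N}) (l : 'I_p) : nat :=
  \big[minn/N.-1]_(s in S | (l * m + m < s)%N) (s : nat).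

Definition gamma (S : {set 'I_N}) : {set 'I_N} :=
  [set x : 'I_N | [exists l in unachieved S, (Lkey S l <= x <= Ukey S l)%N]].
End Algo.

Section Prob.
Variable R : realType.
Local Open Scope ring_scope.

Definition qprob (p m : nat) (S : {set 'I_(p * m)}) : R :=
  Num.min 1 (cHP R * p%:R / ((#|gamma S|)%:R * (logstar R p)%:R)).

(* probability that the set of keys sampled in the round (each key of gamma S
   independently with probability q) satisfies the event E *)
Definition round_prob (p m : nat) (S : {set 'I_(p * m)})
    (E : pred {set 'I_(p * m)}) : R :=
  let q := qprob S in
  \sum_(T : {set 'I_(p * m)} | (T \subset gamma S) && E T)
     q ^+ #|T| * (1 - q) ^+ (#|gamma S| - #|T|).
End Prob.

From HB Require Import structures.
From mathcomp Require Import all_boot all_order all_algebra.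
From mathcomp Require Import reals exp sequences.
From mathcomp Require Import ring lra zify.
Import Order.TTheory GRing.Theory Num.Theory.
Set Implicit Arguments. Unset Strict Implicit. Unset Printing Implicit Defensive.

(* Let k be the number of splitters unachieved before the round, f(T) the
   number still unachieved after it samples T, q the sampling probability and
   L = log* p.  Every key of gamma lies within one target width of the target
   of an unachieved splitter, so |gamma| <= k (3m + 1); every target but the
   last has m + 1 keys, so an unachieved splitter stays unachieved with
   probability (1 - q)^(m+1) <= exp (- t ln (5/2)) = (2/5)^t.  Hence
   E f <= k (2/5)^t + 1 <= (4/5) p / (t 2^t L) + 1.  Targets of splitters that
   are two apart are disjoint, so their misses are independent and
   Var f <= 3 E f.  Since p / (log p L) tends to infinity, Chebyshev's
   inequality bounds the probability that f exceeds the larger threshold. *)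

Lemma card_interval n (A : {pred 'I_n}) a b :
  (forall x, x \in A -> a <= x < b)%N -> (#|A| <= b - a)%N.
Proof.
move=> Aab; rewrite cardE -(size_map val) -(size_iota a (b - a)).
apply: uniq_leq_size => [|y /mapP[x]]; first by rewrite (map_inj_uniq val_inj) enum_uniq.
by rewrite mem_enum => /Aab xab ->; rewrite mem_iota /=; lia.
Qed.

Lemma sum_pred_interval n (U : {set 'I_n}) (P : pred 'I_n) a b :
  (forall x, P x -> a <= x < b)%N -> (\sum_(x in U) P x <= b - a)%N.
Proof.
move=> Pab; apply: leq_trans (card_interval (A := [pred x in U | P x]) _).
  by rewrite -sum1_card big_mkcondr /=; apply: leq_sum => x _; case: (P x).
by move=> x /andP[_ /Pab].
Qed.

Lemma card_bigcup_le (I T : finType) (P : {pred I}) (F : I -> {set T}) :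
  (#|\bigcup_(i in P) F i| <= \sum_(i in P) #|F i|)%N.
Proof.
elim/big_ind2: _ => [|n A k B leAn leBk|//]; first by rewrite cards0.
exact: leq_trans (leq_card_setU A B).1 (leq_add leAn leBk).
Qed.

Section Splitters.
Variables (p m : nat) (S : {set 'I_(p * m)}).

Definition target_set (l : 'I_p) : {set 'I_(p * m)} := [set i | in_target l i].

Lemma unachieved_setU T :
  unachieved (S :|: T) = [set l in unachieved S | [disjoint T & target_set l]].
Proof.
apply/setP => l; rewrite !inE disjoints_subset -andbA; congr (_ && _).
apply/forall_inP/andP => [notS|[/forall_inP notS /subsetP notT] i].
  split; first by apply/forall_inP => i iS; apply: notS; rewrite inE iS.
  by apply/subsetP => i iT; rewrite !inE notS // inE iT orbT.
by rewrite inE => /orP[/notS //|/notT]; rewrite !inE.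
Qed.

Lemma leq_Lkey (l : 'I_p) (s : 'I_(p * m)) :
  s \in S -> (s < l * m)%N -> (s <= Lkey S l)%N.
Proof. by move=> sS slm; apply: (@leq_bigmax_cond _ _ val); rewrite sS. Qed.

Lemma Lkey_leq (l : 'I_p) x : (l * m <= x)%N -> (Lkey S l <= x)%N.
Proof. by move=> lmx; apply/bigmax_leqP => s /andP[_ slm]; lia. Qed.

Lemma Ukey_leq (l : 'I_p) (s : 'I_(p * m)) :
  s \in S -> (l * m + m < s)%N -> (Ukey S l <= s)%N.
Proof. by move=> sS sgt; rewrite /Ukey -minEnat -leEnat bigmin_le_cond ?sS. Qed.

Lemma leq_Ukey (l : 'I_p) (x : 'I_(p * m)) : (x <= l * m + m)%N -> (x <= Ukey S l)%N.
Proof.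
move=> xle; rewrite /Ukey -minEnat -leEnat; apply/bigmin_geP; split.
  by rewrite leEnat; have := ltn_ord x; lia.
by move=> s /andP[_ sgt]; rewrite leEnat; lia.
Qed.

Lemma target_sub_gamma l : l \in unachieved S -> target_set l \subset gamma S.
Proof.
move=> lU; apply/subsetP => x; rewrite !inE /in_target => /andP[lmx xle].
by apply/exists_inP; exists l; rewrite // Lkey_leq ?leq_Ukey.
Qed.

Definition window (l : 'I_p) : {set 'I_(p * m)} :=
  [set x : 'I_(p * m) | (l * m - m <= x <= l * m + 2 * m)%N].

Lemma card_window l : (#|window l| <= 3 * m + 1)%N.
Proof.
apply: (@leq_trans ((l * m + 2 * m).+1 - (l * m - m))); last by lia.
by apply: card_interval => x; rewrite inE; lia.
Qed.

Hypothesis m_gt0 : (0 < m)%N.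

Lemma card_target (l : 'I_p) : (l.+1 < p)%N -> (m.+1 <= #|target_set l|)%N.
Proof.
move=> lp; have ltN (k : 'I_m.+1) : (l * m + k < p * m)%N.
  have : (l.+2 * m <= p * m)%N by rewrite leq_mul2r lp orbT.
  by have := ltn_ord k; rewrite !mulSnr; lia.
have inj_shift : injective (fun k => Ordinal (ltN k)) by move=> a b [/addnI/val_inj].
rewrite -[m.+1]card_ord -(card_imset _ inj_shift); apply/subset_leq_card/subsetP.
by move=> _ /imsetP[k _ ->]; rewrite inE /in_target /=; have := ltn_ord k; lia.
Qed.

Lemma disjoint_target (l l' : 'I_p) :
  (l.+2 <= l')%N -> [disjoint target_set l & target_set l'].
Proof.
move=> ll'; rewrite -setI_eq0; apply/eqP/setP => i; rewrite !inE /in_target.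
have : (l.+2 * m <= l' * m)%N by rewrite leq_mul2r ll' orbT.
by rewrite !mulSnr; lia.
Qed.

(* A key x of gamma far below (resp. above) the target of an unachieved l is
   next to the target of a splitter lying strictly between L(l) (resp. U(l))
   and the target of l; that target holds no sample, by the extremality of
   L(l) (resp. U(l)) and since l is unachieved. *)
Lemma gamma_below (l : 'I_p) (x : 'I_(p * m)) : l \in unachieved S ->
  (Lkey S l <= x < l * m - m)%N -> exists2 j, j \in unachieved S & x \in window j.
Proof.
rewrite inE => /andP[_ /forall_inP lU] /andP[Lx xlt].
have [a /andP[ax xa]] : exists a, (a * m <= x < a * m + m)%N.
  by exists (x %/ m); rewrite leq_divM -mulSnr ltn_ceil.
have a1l : (a.+1 < l)%N by rewrite -(ltn_pmul2r m_gt0) mulSnr; lia.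
have a2l : (a * m + 2 * m <= l * m)%N.
  by have := a1l; rewrite -(leq_pmul2r m_gt0) !mulSnr; lia.
have a1p : (a.+1 < p)%N by apply: ltn_trans a1l (ltn_ord l).
exists (Ordinal a1p); last by rewrite inE /= mulSnr; lia.
rewrite inE /=; apply/forall_inP => i iS; apply/negP.
rewrite /in_target /= mulSnr => /andP[ilo ihi].
have [ilt|ige] := ltnP i (l * m); first by have := leq_Lkey iS ilt; lia.
by move/negP: (lU i iS); apply; apply/andP; split; lia.
Qed.

Lemma gamma_above (l : 'I_p) (x : 'I_(p * m)) : l \in unachieved S ->
  (l * m + 2 * m < x <= Ukey S l)%N -> exists2 j, j \in unachieved S & x \in window j.
Proof.
rewrite inE => /andP[_ /forall_inP lU] /andP[xgt xU].
have [[|j] /andP[jx xj]] : exists b, (b * m < x <= b * m + m)%N.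
- exists (x.-1 %/ m); have := leq_divM x.-1 m; have := ltn_ceil x.-1 m_gt0.
  by rewrite mulSnr; lia.
- by move: xj; rewrite mul0n; lia.
rewrite mulSnr in jx xj.
have lj : (l < j)%N by rewrite -(ltn_pmul2r m_gt0); lia.
have ljm : (l * m + m <= j * m)%N by rewrite -mulSnr leq_pmul2r.
have jp : (j < p)%N by rewrite -(ltn_pmul2r m_gt0); have := ltn_ord x; lia.
exists (Ordinal jp); last by rewrite inE /=; lia.
rewrite inE /= (leq_ltn_trans _ lj) //; apply/forall_inP => i iS; apply/negP.
rewrite /in_target /= => /andP[ilo ihi].
have [igt|ile] := ltnP (l * m + m) i; first by have := Ukey_leq iS igt; lia.
by move/negP: (lU i iS); apply; apply/andP; split; lia.
Qed.

Lemma gamma_sub_windows : gamma S \subset \bigcup_(l in unachieved S) window l.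
Proof.
apply/subsetP => x; rewrite inE => /exists_inP[l lU /andP[Lx xU]].
suff [j jU xj] : exists2 j, j \in unachieved S & x \in window j.
  by apply/bigcupP; exists j.
have [xlt|xge] := ltnP x (l * m - m); first by apply: (gamma_below lU); rewrite Lx.
have [xgt|xle] := ltnP (l * m + 2 * m) x; first by apply: (gamma_above lU); rewrite xgt.
by exists l; rewrite // inE xge.
Qed.

Lemma card_gamma : (#|gamma S| <= #|unachieved S| * (3 * m + 1))%N.
Proof.
apply: leq_trans (subset_leq_card gamma_sub_windows) _.
apply: leq_trans (card_bigcup_le _ _) _.
by rewrite -sum_nat_const leq_sum // => l _; apply: card_window.
Qed.

End Splitters.

Local Open Scope ring_scope.

Section Sampling.
Variables (R : realType) (T : finType) (G : {set T}) (q : R).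

(* Law of the random subset of G containing each element independently with
   probability q; only its values on subsets of G matter. *)
Definition pmass (X : {set T}) : R := q ^+ #|X| * (1 - q) ^+ (#|G| - #|X|).

Definition expect (f : {set T} -> R) : R :=
  \sum_(X : {set T} | X \subset G) pmass X * f X.

Lemma sum_pmass_disjoint (A : {set T}) :
  \sum_(X : {set T} | (X \subset G) && [disjoint X & A]) pmass X = (1 - q) ^+ #|A :&: G|.
Proof.
(* Expanding \prod_i (F i + H i) over subsets J, the term of J is pmass J
   if J is a subset of G :\: A, and 0 otherwise. *)
pose F i : R := if i \in G :\: A then q else 0.
pose H i : R := if i \in G then 1 - q else 1.
have prodFH : \prod_i (F i + H i) = (1 - q) ^+ #|A :&: G|.
  rewrite -prodr_const [RHS]big_mkcond; apply: eq_bigr => i _.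
  by rewrite /F /H !inE; case: (i \in A); case: (i \in G) => /=; ring.
rewrite -prodFH bigA_distr big_mkcond /=; apply: eq_bigr => J _; rewrite -subsetD.
have [sJ|/subsetPn[i iJ iGA]] := boolP (J \subset G :\: A); last first.
  by rewrite (bigD1 i) //= iJ /F (negbTE iGA) mul0r.
have sJG : J \subset G by move: sJ; rewrite subsetD => /andP[].
rewrite (bigID (mem J)) /= (eq_bigr (fun=> q)) => [|i iJ]; last first.
  by rewrite iJ /F (subsetP sJ).
rewrite prodr_const (eq_bigr H) => [|i /negbTE iJ]; last by rewrite iJ.
have cardGJ : (#|G| - #|J| = #|G :\: J|)%N by rewrite cardsD (setIidPr sJG).
rewrite -big_mkcondr /= /pmass cardGJ; congr (_ * _); rewrite -prodr_const.
by apply: eq_bigl => i; rewrite !inE andbC.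
Qed.

Lemma eq_expect f g : f =1 g -> expect f = expect g.
Proof. by move=> fg; apply: eq_bigr => X _; rewrite fg. Qed.

Lemma expect_disjoint (A : {set T}) :
  expect (fun X => [disjoint X & A]%:R) = (1 - q) ^+ #|A :&: G|.
Proof.
rewrite -sum_pmass_disjoint /expect big_mkcondr /=; apply: eq_bigr => X _.
by case: ifP; rewrite ?mulr1 ?mulr0.
Qed.

Lemma expect1 : expect (fun=> 1) = 1.
Proof.
rewrite -[RHS](expr0 (1 - q)) -(cards0 T) -(set0I G) -(expect_disjoint set0).
by apply: eq_expect => X; rewrite -setI_eq0 setI0 eqxx.
Qed.

Lemma expectD f g : expect (fun X => f X + g X) = expect f + expect g.
Proof. by rewrite /expect -big_split; apply: eq_bigr => X _; rewrite mulrDr. Qed.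

Lemma expectZ c f : expect (fun X => c * f X) = c * expect f.
Proof. by rewrite /expect mulr_sumr; apply: eq_bigr => X _; rewrite mulrCA. Qed.

Lemma expect_sum (I : finType) (P : pred I) (f : I -> {set T} -> R) :
  expect (fun X => \sum_(i | P i) f i X) = \sum_(i | P i) expect (f i).
Proof. by rewrite /expect; under eq_bigr do rewrite mulr_sumr; exact: exchange_big. Qed.

Lemma expect_centered_sq f : let mu := expect f in
  expect (fun X => (f X - mu) ^+ 2) = expect (fun X => f X ^+ 2) - mu ^+ 2.
Proof.
move=> mu; rewrite (@eq_expect _ (fun X => f X ^+ 2 + (- (2 * mu) * f X + mu ^+ 2 * 1))).
  by rewrite !expectD !expectZ expect1 -/mu; ring.
by move=> X; ring.
Qed.

Hypotheses (q_ge0 : 0 <= q) (q_le1 : q <= 1).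

Lemma pmass_ge0 X : 0 <= pmass X.
Proof. by rewrite mulr_ge0 ?exprn_ge0 ?subr_ge0. Qed.

Lemma expect_ge0 f : (forall X, 0 <= f X) -> 0 <= expect f.
Proof. by move=> f_ge0; apply: sumr_ge0 => X _; rewrite mulr_ge0 ?pmass_ge0. Qed.

Lemma chebyshev f (M : R) : let mu := expect f in mu < M ->
  \sum_(X : {set T} | (X \subset G) && (M < f X)) pmass X <=
  (expect (fun X => f X ^+ 2) - mu ^+ 2) / (M - mu) ^+ 2.
Proof.
move=> mu muM; have d_gt0 : 0 < (M - mu) ^+ 2 by rewrite exprn_gt0 // subr_gt0.
rewrite -expect_centered_sq /expect mulr_suml big_mkcondr /=; apply: ler_sum => X _.
rewrite -mulrA; case: ifP => fM; last by rewrite mulr_ge0 ?pmass_ge0 ?divr_ge0 ?sqr_ge0.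
rewrite ler_peMr ?pmass_ge0 // ler_pdivlMr // mul1r.
by rewrite ler_pXn2r ?nnegrE ?subr_ge0 ?lerD2r ?ltW // (lt_trans muM).
Qed.

End Sampling.

Arguments eq_expect {R T G q} [f g].

Section Logarithms.
Variable R : realType.
Implicit Types (x y : R) (p : nat).

Lemma ln_le_powR x a : 0 < x -> 0 < a -> ln x <= x `^ a / a.
Proof.
move=> x_gt0 a_gt0; rewrite ler_pdivlMr // mulrC -ln_powR.
exact/ltW/ln_sublinear/powR_gt0.
Qed.

Lemma ln2_ge_half : 1 / 2 <= ln (2 : R).
Proof.
rewrite -ler_expR lnK ?posrE //.
have := expR_ge1Dx (- (1 / 2) : R); rewrite expRN.
have := expR_gt0 (1 / 2 : R); set e := expR _ => e_gt0.
have := mulfV (lt0r_neq0 e_gt0); nra.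
Qed.

Lemma log2_ge1 x : 2 <= x -> 1 <= log2 x.
Proof.
move=> x_ge2; have ln2_gt0 : 0 < ln (2 : R) by have := ln2_ge_half; lra.
by rewrite ler_pdivlMr // mul1r ler_ln ?posrE //; lra.
Qed.

Lemma log2_le_pred x : 2 <= x -> log2 x <= x - 1.
Proof.
move=> x_ge2; have ln2_ge := ln2_ge_half.
rewrite ler_pdivrMr; last lra.
have x2_gt0 : 0 < x / 2 by rewrite divr_gt0 //; lra.
have -> : ln x = ln 2 + ln (1 + (x / 2 - 1)).
  by rewrite [1 + _]addrC subrK -lnM ?posrE // mulrC divfK ?pnatr_eq0.
have ln_le : ln (1 + (x / 2 - 1)) <= x / 2 - 1 by apply: le_ln1Dx; lra.
have : 0 <= (x - 2) * (ln 2 - 1 / 2) by apply: mulr_ge0; lra.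
lra.
Qed.

Lemma logstar_iter_le n y :
  (logstar_iter n y)%:R <= (if y <= 1 then 0 else 1 + y) :> R.
Proof.
elim: n y => [|n IHn] y /=; first by case: (leP y 1) => [//|]; lra.
case: (leP y 1) => // y_gt1; rewrite -addn1 natrD addrC lerD2l.
apply: le_trans (IHn _) _; case: (leP (log2 y) 1) => [_|lg_gt1]; first lra.
suff /log2_le_pred : 2 <= y by lra.
have ln2_gt0 : 0 < ln (2 : R) by have := ln2_ge_half; lra.
move: lg_gt1; rewrite ltr_pdivlMr // mul1r ltr_ln ?posrE; lra.
Qed.

Lemma logstar_gt1 p :
  (1 < p)%N -> logstar R p = (logstar_iter p (log2 p%:R : R)).+1.
Proof. by move=> p_gt1; rewrite /logstar /= leNgt ltr1n p_gt1. Qed.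

Lemma logstar_ge1 p : (1 < p)%N -> 1 <= (logstar R p)%:R :> R.
Proof. by move/logstar_gt1->; rewrite ler1n. Qed.

Lemma logstar_le p : (1 < p)%N -> (logstar R p)%:R <= 2 + log2 (p%:R : R).
Proof.
move=> p_gt1; have p2 : 2 <= p%:R :> R by rewrite (ler_nat R 2).
rewrite logstar_gt1 // -addn1 natrD addrC.
have := logstar_iter_le p (log2 p%:R); have := log2_ge1 p2.
by case: (leP (log2 p%:R) 1); lra.
Qed.

Lemma log2_sqr_le x : 1 <= x -> log2 x ^+ 2 <= 64 * Num.sqrt x.
Proof.
move=> x_ge1; have x_gt0 : 0 < x by lra.
set r := x `^ (1 / 4).
have <- : r ^+ 2 = Num.sqrt x.
  by rewrite -powR_mulrn ?powR_ge0 // -powRrM -powR12_sqrt ?ltW //; congr (_ `^ _); field.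
have lnx_le : ln x <= 4 * r.
  by rewrite (_ : 4 * r = r / (1 / 4)); [apply: ln_le_powR; lra | field].
have lnx_ge0 := ln_ge0 x_ge1; have ln2_ge := ln2_ge_half.
have log2_le : log2 x <= 8 * r by rewrite ler_pdivrMr; nra.
have log2_ge0 : 0 <= log2 x by rewrite divr_ge0 //; lra.
by rewrite (_ : 64 * r ^+ 2 = (8 * r) ^+ 2); [apply: lerXn2r; rewrite ?nnegrE; lra | ring].
Qed.

(* log2 p <= 8 p^(1/4) and log* p <= 3 log2 p. *)
Lemma log2_mul_logstar_le p : (1 < p)%N ->
  log2 (p%:R : R) * (logstar R p)%:R <= 192 * Num.sqrt p%:R.
Proof.
move=> p_gt1; have p2 : 2 <= p%:R :> R by rewrite (ler_nat R 2).
have := log2_sqr_le (le_trans (ler_nat R 1 2) p2); have := logstar_le p_gt1.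
have := log2_ge1 p2; rewrite expr2; nra.
Qed.

Lemma div_log2_logstar_ge (K : R) : exists P0 : nat, forall p, (P0 <= p)%N ->
  K <= p%:R / (log2 (p%:R : R) * (logstar R p)%:R).
Proof.
exists (maxn 2 (Num.bound ((192 * K) ^+ 2))) => p; rewrite geq_max => /andP[p_gt1 p_ge].
have p_ge0 : 0 <= p%:R :> R by [].
have K_le : 192 * K <= Num.sqrt p%:R.
  rewrite (le_trans (ler_norm _)) // -sqrtr_sqr ler_sqrt //.
  by apply/ltW/(lt_le_trans (archi_boundP (sqr_ge0 _))); rewrite ler_nat.
have lg_ge1 : 1 <= log2 (p%:R : R) by rewrite log2_ge1 // (ler_nat R 2).
have L_ge1 := logstar_ge1 p_gt1.
rewrite ler_pdivlMr; last by apply: mulr_gt0; lra.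
have lgL_le := log2_mul_logstar_le p_gt1.
have [K_le0|K_gt0] := lerP K 0.
  by rewrite (le_trans _ p_ge0) // mulr_le0_ge0 // mulr_ge0 //; lra.
apply: le_trans (_ : K * (192 * Num.sqrt p%:R) <= _); first by rewrite ler_pM2l.
rewrite mulrA [K * 192]mulrC -{2}[p%:R](sqr_sqrtr p_ge0) expr2.
by rewrite ler_wpM2r ?sqrtr_ge0.
Qed.

End Logarithms.

Section Moments.
Variables (R : realType) (p m : nat) (S : {set 'I_(p * m)}) (q : R).
Local Notation U := (unachieved S).
Local Notation pmiss l := ((1 - q) ^+ #|target_set m l|).

Definition num_unachieved (T : {set 'I_(p * m)}) : R := #|unachieved (S :|: T)|%:R.

Lemma num_unachievedE T :
  num_unachieved T = \sum_(l in U) [disjoint T & target_set m l]%:R.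
Proof.
rewrite /num_unachieved unachieved_setU -sum1_card natr_sum big_set big_mkcondr /=.
by apply: eq_bigr => l _; case: [disjoint _ & _].
Qed.

Lemma expect_num_unachieved :
  expect (gamma S) q num_unachieved = \sum_(l in U) pmiss l.
Proof.
rewrite (eq_expect num_unachievedE) expect_sum; apply: eq_bigr => l lU.
by rewrite expect_disjoint (setIidPl (target_sub_gamma lU)).
Qed.

Lemma expect_sqr_num_unachieved :
  expect (gamma S) q (fun T => num_unachieved T ^+ 2) =
  \sum_(l in U) \sum_(l' in U) (1 - q) ^+ #|target_set m l :|: target_set m l'|.
Proof.
have sqrE T : num_unachieved T ^+ 2 = \sum_(l in U) \sum_(l' in U)
    [disjoint T & target_set m l :|: target_set m l']%:R.
  rewrite num_unachievedE expr2 mulr_suml; apply: eq_bigr => l _.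
  rewrite mulr_sumr; apply: eq_bigr => l' _.
  by rewrite !disjoints_subset setCU subsetI -mulnb natrM.
rewrite (eq_expect sqrE) expect_sum; apply: eq_bigr => l lU.
rewrite expect_sum; apply: eq_bigr => l' l'U.
by rewrite expect_disjoint (setIidPl _) // subUset !target_sub_gamma.
Qed.

Definition adjacent (l l' : 'I_p) := (l <= l'.+1)%N && (l' <= l.+1)%N.

Lemma sum_adjacent_le (l : 'I_p) : \sum_(l' in U) (adjacent l l')%:R <= 3 :> R.
Proof.
rewrite -natr_sum ler_nat.
apply: leq_trans (sum_pred_interval U (a := l.-1) (b := l.+2) _) _.
  by move=> l' /andP[]; lia.
by lia.
Qed.

Hypotheses (m_gt0 : (0 < m)%N) (q_ge0 : 0 <= q) (q_le1 : q <= 1).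

(* Non-adjacent splitters have disjoint targets, hence independent misses;
   each splitter has at most 3 adjacent ones. *)
Lemma var_num_unachieved_le :
  expect (gamma S) q (fun T => num_unachieved T ^+ 2) -
    expect (gamma S) q num_unachieved ^+ 2 <= 3 * expect (gamma S) q num_unachieved.
Proof.
rewrite expect_sqr_num_unachieved expect_num_unachieved lerBlDr.
have r_ge0 : 0 <= 1 - q by rewrite subr_ge0.
have r_le1 : 1 - q <= 1 by rewrite lerBlDr lerDl.
have pair_le l l' : (1 - q) ^+ #|target_set m l :|: target_set m l'| <=
    pmiss l * pmiss l' + (adjacent l l')%:R * pmiss l.
  have [adj|nadj] := boolP (adjacent l l').
    rewrite mul1r ler_wpDl ?mulr_ge0 ?exprn_ge0 // ler_wiXn2l //.
    by rewrite subset_leq_card // subsetUl.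
  rewrite mul0r addr0 cardsU disjoint_setI0 ?cards0 ?subn0 ?exprD //.
  move: nadj; rewrite negb_and -!ltnNge => /orP[] /(disjoint_target m_gt0) //.
  by rewrite disjoint_sym.
apply: le_trans (ler_sum _ (fun l _ => ler_sum _ (fun l' _ => pair_le l l'))) _.
rewrite expr2 big_distrlr mulr_sumr -big_split /=; apply: ler_sum => l _.
rewrite big_split /= [X in _ <= X]addrC lerD2l -mulr_suml ler_wpM2r ?exprn_ge0 //.
exact: sum_adjacent_le.
Qed.

End Moments.

Section Round.
Variable R : realType.

Lemma ln52_gt0 : 0 < ln (5 / 2 : R).
Proof. by rewrite ln_gt0 //; lra. Qed.

Lemma qprob_ge0 p m (S : {set 'I_(p * m)}) : 0 <= qprob R S.
Proof.
by rewrite le_min ler01 /= divr_ge0 ?mulr_ge0 ?(ltW ln52_gt0).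
Qed.

Lemma qprob_le1 p m (S : {set 'I_(p * m)}) : qprob R S <= 1.
Proof. by rewrite ge_min lexx. Qed.

(* Nonemptiness of gamma matters: otherwise qprob is 0, as x / 0 = 0. *)
Lemma one_sub_qprob_pow_le p m (S : {set 'I_(p * m)}) (t : R) :
  (0 < m)%N -> (0 < #|gamma S|)%N -> 0 < t -> 0 < (logstar R p)%:R :> R ->
  #|unachieved S|%:R * (t * (logstar R p)%:R) <= p%:R ->
  (1 - qprob R S) ^+ m.+1 <= expR (- (t * ln (5 / 2))).
Proof.
move=> m_gt0 G_gt0 t_gt0 L_gt0 k_le.
set L : R := (logstar R p)%:R in L_gt0 k_le *; set g : R := #|gamma S|%:R.
have g_gt0 : 0 < g by rewrite ltr0n.
have g_le : g <= #|unachieved S|%:R * (3 * m%:R + 1).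
  by have := card_gamma S m_gt0; rewrite -(ler_nat R) natrM natrD natrM.
rewrite /qprob -/L -/g; set z := cHP R * p%:R / (g * L).
have [z_ge1|z_lt1] := leP 1 z; first by rewrite subrr expr0n expR_ge0.
apply: le_trans (_ : expR (- z) ^+ m.+1 <= _).
  by apply: lerXn2r; rewrite ?nnegrE ?expR_ge0 ?expR_ge1Dx //; lra.
rewrite -expRM_natr ler_expR mulNr lerN2 /z /cHP mulrAC ler_pdivlMr ?mulr_gt0 //.
have tL_gt0 : 0 < t * L by rewrite mulr_gt0.
have gtL : g * (t * L) <= 3 * p%:R * (m.+1)%:R.
  apply: le_trans (_ : #|unachieved S|%:R * (t * L) * (3 * m%:R + 1) <= _).
    by rewrite mulrAC ler_wpM2r // ltW.
  apply: le_trans (_ : p%:R * (3 * m%:R + 1) <= _).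
    by rewrite ler_wpM2r // addr_ge0 // mulr_ge0.
  rewrite [X in _ <= X]mulrAC [X in _ <= X]mulrC ler_wpM2l //.
  by rewrite -[m.+1]addn1 natrD; lra.
have := ln52_gt0; nra.
Qed.

Lemma powR2_mul_expR_le (t : R) :
  1 <= t -> 2 `^ t * expR (- (t * ln (5 / 2))) <= 4 / 5.
Proof.
move=> t_ge1; rewrite /powR pnatr_eq0 /= -expRD.
have -> : 4 / 5 = expR (ln 2 - ln (5 / 2)) :> R.
  by rewrite expRD expRN !lnK ?posrE //; [field | lra].
rewrite ler_expR; have : ln 2 <= ln (5 / 2 : R) by rewrite ler_ln ?posrE //; lra.
by have := ln52_gt0; nra.
Qed.

Lemma one_sub_qprob_pow_target_le p m (S : {set 'I_(p * m)}) (t : R) l :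
  (0 < m)%N -> 0 < t -> 0 < (logstar R p)%:R :> R ->
  #|unachieved S|%:R * (t * (logstar R p)%:R) <= p%:R -> l \in unachieved S ->
  (1 - qprob R S) ^+ #|target_set m l| <= expR (- (t * ln (5 / 2))) + (l.+1 == p)%:R.
Proof.
move=> m_gt0 t_gt0 L_gt0 k_le lU.
have r_ge0 : 0 <= 1 - qprob R S by rewrite subr_ge0 qprob_le1.
have r_le1 : 1 - qprob R S <= 1 by rewrite lerBlDr lerDl qprob_ge0.
have [lp|pl] := ltnP l.+1 p; last first.
  have -> : l.+1 == p by rewrite eqn_leq ltn_ord.
  by apply: le_trans (exprn_ile1 _ r_ge0 r_le1) _; rewrite lerDr expR_ge0.
have G_gt0 : (0 < #|gamma S|)%N.
  apply: leq_trans (subset_leq_card (target_sub_gamma lU)).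
  exact: leq_trans (card_target m_gt0 lp).
rewrite ltn_eqF // addr0; apply: le_trans (ler_wiXn2l r_ge0 r_le1 (card_target m_gt0 lp)) _.
exact: one_sub_qprob_pow_le.
Qed.

Lemma expect_num_unachieved_le p m (S : {set 'I_(p * m)}) (t : R) :
  (1 < p)%N -> (0 < m)%N -> 1 <= t ->
  #|unachieved S|%:R <= p%:R / (t * (logstar R p)%:R) ->
  expect (gamma S) (qprob R S) (num_unachieved R S) <=
  4 / 5 * (p%:R / (t * 2 `^ t * (logstar R p)%:R)) + 1.
Proof.
move=> p_gt1 m_gt0 t_ge1 k_le; have := logstar_ge1 R p_gt1.
set L : R := (logstar R p)%:R in k_le * => L_ge1.
set k := #|unachieved S| in k_le *; set e := expR (- (t * ln (5 / 2))).
have tL_gt0 : 0 < t * L by rewrite mulr_gt0 //; lra.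
have miss_le l : l \in unachieved S ->
    (1 - qprob R S) ^+ #|target_set m l| <= e + (l.+1 == p)%:R.
  by apply: one_sub_qprob_pow_target_le; rewrite // -?ler_pdivlMr //; lra.
rewrite expect_num_unachieved; apply: le_trans (ler_sum _ miss_le) _.
rewrite big_split /= sumr_const -/k.
have last_le : \sum_(l in unachieved S) (l.+1 == p)%:R <= 1 :> R.
  rewrite -natr_sum -[1 : R]/(1%:R) ler_nat.
  apply: leq_trans (sum_pred_interval _ (a := p.-1) (b := p) _) _; last by lia.
  by move=> l /eqP; lia.
have ke_le : e *+ k <= 4 / 5 * (p%:R / (t * 2 `^ t * L)).
  have two_t_gt0 : 0 < 2 `^ t :> R by rewrite powR_gt0.
  have e_ge0 : 0 <= e := expR_ge0 _.
  rewrite -[e *+ k]mulr_natl; apply: le_trans (ler_wpM2r e_ge0 k_le) _.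
  rewrite (_ : _ / _ * e = p%:R / (t * 2 `^ t * L) * (2 `^ t * e)); last first.
    by field; rewrite !gt_eqF //; lra.
  rewrite mulrC ler_wpM2r ?powR2_mul_expR_le //.
  by rewrite divr_ge0 // mulr_ge0 // ?mulr_ge0; lra.
lra.
Qed.

(* For M >= 10 we get mu <= 9 M / 10, so (M - mu)^2 >= M^2 / 100 and the
   ratio is at most 300 / M. *)
Lemma chebyshev_ratio_le (eps mu M : R) : 0 < eps -> 0 <= mu ->
  mu <= 4 / 5 * M + 1 -> 10 + 300 / eps <= M -> 3 * mu / (M - mu) ^+ 2 <= eps.
Proof.
move=> eps_gt0 mu_ge0 mu_le M_ge.
have h300 : 0 < 300 / eps by rewrite divr_gt0.
have d_gt0 : 0 < (M - mu) ^+ 2 by rewrite exprn_gt0 // subr_gt0; lra.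
have epsM : 300 <= eps * M by rewrite mulrC -ler_pdivrMr //; lra.
have sq_le : (M / 10) ^+ 2 <= (M - mu) ^+ 2 by apply: lerXn2r; rewrite ?nnegrE; lra.
have : eps * (M / 10) ^+ 2 <= eps * (M - mu) ^+ 2 by rewrite ler_pM2l.
rewrite ler_pdivrMr // expr2; nra.
Qed.

End Round.

Theorem lemma2p5 (R : realType) :
  forall eps : R, 0 < eps -> exists P0 : nat, forall (p m : nat) (t : R),
    (P0 <= p)%N -> (0 < m)%N -> 1 <= t ->
    forall S : {set 'I_(p * m)},
      (#|unachieved S|)%:R <= p%:R / (t * (logstar R p)%:R) ->
      round_prob R S (fun T =>
        Num.max (p%:R / (log2 (p%:R : R) * (logstar R p)%:R))
                (p%:R / (t * 2 `^ t * (logstar R p)%:R))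
          < (#|unachieved (S :|: T)|)%:R) <= eps.
Proof.
move=> eps eps_gt0; have [P0 P0_le] := div_log2_logstar_ge (10 + 300 / eps).
exists (maxn 2 P0) => p m t; rewrite geq_max => /andP[p_gt1 /P0_le A_ge] m_gt0 t_ge1 S k_le.
set A := p%:R / _ in A_ge *; set B := p%:R / (t * _ * _); set M := Num.max A B.
have q_ge0 := qprob_ge0 R S; have q_le1 := qprob_le1 R S.
set mu := expect (gamma S) (qprob R S) (num_unachieved R S).
have mu_ge0 : 0 <= mu by apply: expect_ge0.
have M_ge : 10 + 300 / eps <= M by rewrite (le_trans A_ge) // le_max lexx.
have mu_le : mu <= 4 / 5 * M + 1.
  have B_le : B <= M by rewrite le_max lexx orbT.
  apply: le_trans (expect_num_unachieved_le p_gt1 m_gt0 t_ge1 k_le) _.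
  rewrite -/B; lra.
have muM : mu < M.
  have : 0 < 300 / eps by rewrite divr_gt0.
  lra.
apply: le_trans (chebyshev q_ge0 q_le1 muM) _.
apply: le_trans (chebyshev_ratio_le eps_gt0 mu_ge0 mu_le M_ge).
by rewrite ler_wpM2r ?invr_ge0 ?sqr_ge0 ?var_num_unachieved_le.
Qed.
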